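(* Let $c>0$, let $\beta>0,\delta>0$, and let $G$ be a $c$-Ramsey graph on $n$ vertices together with a set $S\subseteq V(G)$, $|S|\ge n^{3/4}$, such that for all $A,B\subseteq S$ with $|A|,|B|\ge |S|^{1-\beta}$ we have $\delta\le d(A,B)\le 1-\delta$. Let $m=|S|$. Let $r\ge1$ and $X,Y_1,\dots,Y_r\subseteq S$ with $|X|\ge r\,m^{1-\beta}$ and $|Y_1|,\dots,|Y_r|\ge m^{1-\beta}$. Then there exists $v\in X$ such that $d(v,Y_i)\ge\delta$ for every $i=1,\dots,r$.
   Context: Logarithms base 2; $G$ is $c$-Ramsey if no set of $c\log n$ vertices is a clique or independent set. For $A,B\subseteq V(G)$, $d(A,B)=e(A,B)/(|A||B|)$ where $e(A,B)$ is the number of edges of $G$ with one endpoint in $A$ and the other in $B$; $d(v,B)$ means $d(\{v\},B)$. *)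

From HB Require Import structures.
From mathcomp Require Import all_boot all_order all_algebra.
From mathcomp Require Import reals exp.
Set Implicit Arguments. Unset Strict Implicit. Unset Printing Implicit Defensive.
Import Order.TTheory GRing.Theory Num.Theory.
Local Open Scope ring_scope.

Definition simple_graph (T : finType) (e : rel T) : Prop :=
  symmetric e /\ irreflexive e.

Definition is_clique (T : finType) (e : rel T) (A : {set T}) : bool :=
  [forall x in A, forall y in A, (x != y) ==> e x y].

Definition is_indep (T : finType) (e : rel T) (A : {set T}) : bool :=
  [forall x in A, forall y in A, ~~ e x y].

Definition log2 (R : realType) (x : R) : R := ln x / ln 2.

Definition c_Ramsey (R : realType) (c : R) (T : finType) (e : rel T) : Prop :=
  forall A : {set T}, c * log2 (#|T|%:R : R) <= #|A|%:R ->
    ~~ is_clique e A && ~~ is_indep e A.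

Definition eAB (T : finType) (e : rel T) (A B : {set T}) : nat :=
  #|[set p : T * T | (p.1 \in A) && (p.2 \in B) && e p.1 p.2]|.

Definition dens (R : realType) (T : finType) (e : rel T) (A B : {set T}) : R :=
  (eAB e A B)%:R / (#|A|%:R * #|B|%:R).

From HB Require Import structures.
From mathcomp Require Import all_boot all_order all_algebra.
From mathcomp Require Import reals exp.
Set Implicit Arguments. Unset Strict Implicit. Unset Printing Implicit Defensive.
Import Order.TTheory GRing.Theory Num.Theory.
Local Open Scope ring_scope.

(* If no vertex of X had density at least delta to every Y_i, then X would be
   covered by the r sets of vertices with density below delta to Y_i; one of
   them has at least |X|/r >= m^(1-beta) elements, and as d(A,Y_i) is the
   average of the d(v,Y_i) over v in A, that set A would have d(A,Y_i) < delta,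
   contradicting the density hypothesis. *)

Lemma eAB_sum (T : finType) (e : rel T) (A B : {set T}) :
  eAB e A B = (\sum_(a in A) \sum_(b in B) e a b)%N.
Proof.
rewrite /eAB -sum1_card big_mkcond [RHS]big_mkcond /=.
rewrite (eq_bigr (fun a =>
  \sum_b if (a \in A) && (b \in B) then nat_of_bool (e a b) else 0%N)).
  rewrite pair_big; apply: eq_bigr => -[a b] _; rewrite !inE /=.
  by case: (a \in A); case: (b \in B); case: (e a b).
move=> a _; rewrite big_mkcond; case: (a \in A) => //=.
by rewrite big1.
Qed.

(* [0 < d] covers the empty cases, where [dens] is [0] because [0^-1 = 0]. *)
Lemma dens_lt_of_set1 (R : realType) (T : finType) (e : rel T)
    (A B : {set T}) (d : R) :
  0 < d -> {in A, forall v, dens R e [set v] B < d} -> dens R e A B < d.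
Proof.
move=> d_gt0 lt_d.
have [A0|/set0Pn [a0 a0A]] := eqVneq A set0.
  by rewrite /dens A0 cards0 mul0r invr0 mulr0.
have [B0|B_gt0] := posnP #|B|.
  by rewrite /dens B0 mulr0 invr0 mulr0.
have Bpos : (0 : R) < #|B|%:R by rewrite ltr0n.
have Apos : (0 : R) < #|A|%:R by rewrite ltr0n card_gt0; apply/set0Pn; exists a0.
rewrite /dens ltr_pdivrMr ?mulr_gt0 // eAB_sum natr_sum.
have -> : d * (#|A|%:R * #|B|%:R) = \sum_(a in A) (d * #|B|%:R) :> R.
  by rewrite sumr_const -[RHS]mulr_natr mulrA mulrAC.
apply: ltr_sum => [|a aA]; first by apply/hasP; exists a0; rewrite ?mem_index_enum.
have := lt_d a aA.
by rewrite /dens eAB_sum big_set1 cards1 mul1r ltr_pdivrMr // natr_sum.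
Qed.

Lemma card_le_sum_cover (I T : finType) (X : {set T}) (A : I -> {set T}) :
  {in X, forall v, exists i, v \in A i} -> (#|X| <= \sum_i #|A i|)%N.
Proof.
move=> cover.
under [X in (_ <= X)%N]eq_bigr do rewrite -sum1_card big_mkcond /=.
rewrite -sum1_card big_mkcond /=.
rewrite exchange_big /=; apply: leq_sum => v _.
case: ifP => // /cover [i viA].
by rewrite (bigD1 i) //= viA.
Qed.

Lemma exists_large_cover_class (R : realDomainType) (I T : finType)
    (X : {set T}) (A : I -> {set T}) (p : R) :
  (0 < #|I|)%N -> {in X, forall v, exists i, v \in A i} ->
  #|I|%:R * p <= #|X|%:R -> exists i, p <= #|A i|%:R.
Proof.
move=> /card_gt0P [i0 _] cover le_X.
apply/existsP; apply: contraT => /existsPn small.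
suff : (#|X|%:R : R) < #|I|%:R * p by rewrite ltNge le_X.
have lt_sum : \sum_i (#|A i|%:R : R) < \sum_(i : I) p.
  by apply: ltr_sum => [|i _]; [apply/hasP; exists i0 | rewrite ltNge small].
rewrite sumr_const -mulr_natl -natr_sum in lt_sum.
by apply: le_lt_trans lt_sum; rewrite ler_nat card_le_sum_cover.
Qed.

Theorem mainTheorem7 (R : realType) (c beta delta : R)
  (T : finType) (e : rel T) (S : {set T}) (r : nat)
  (X : {set T}) (Y : 'I_r -> {set T}) :
  0 < c -> 0 < beta -> 0 < delta ->
  simple_graph e ->
  c_Ramsey c e ->
  (#|T|%:R : R) `^ (3 / 4) <= #|S|%:R ->
  (forall A B : {set T}, A \subset S -> B \subset S ->
     (#|S|%:R : R) `^ (1 - beta) <= #|A|%:R ->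
     (#|S|%:R : R) `^ (1 - beta) <= #|B|%:R ->
     delta <= dens R e A B <= 1 - delta) ->
  (1 <= r)%N ->
  X \subset S -> (forall i, Y i \subset S) ->
  r%:R * (#|S|%:R : R) `^ (1 - beta) <= #|X|%:R ->
  (forall i, (#|S|%:R : R) `^ (1 - beta) <= #|Y i|%:R) ->
  exists2 v, v \in X & forall i, delta <= dens R e [set v] (Y i).
Proof.
move=> _ _ delta_gt0 _ _ _ dense r_gt0 XS YS large_X large_Y.
have [/exists_inP [v vX /forallP good_v]|no_good] :=
  boolP [exists v in X, [forall i, delta <= dens R e [set v] (Y i)]].
  by exists v.
pose low i := [set v in X | dens R e [set v] (Y i) < delta].
have cover : {in X, forall v, exists i, v \in low i}.
  move=> v vX; have /forallPn [i bad] := exists_inPn no_good v vX.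
  by exists i; rewrite inE vX ltNge.
have card_I_gt0 : (0 < #|'I_r|)%N by rewrite card_ord.
rewrite -[r in r%:R * _]card_ord in large_X.
have [i large_low] := exists_large_cover_class card_I_gt0 cover large_X.
have low_S : low i \subset S.
  by apply: subset_trans XS; apply/subsetP => v; rewrite inE => /andP [].
have /andP [dense_low _] := dense _ _ low_S (YS i) large_low (large_Y i).
have : dens R e (low i) (Y i) < delta.
  by apply: dens_lt_of_set1 => // v; rewrite inE => /andP [].
by rewrite ltNge dense_low.
Qed.
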